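(* Let $R$ be an associative ring with identity and involution $*$, and let $a\in R^{\#}\cap R^{\dagger}$. Let $\chi_a=\{a,\ a^{\#},\ a^{\dagger},\ a^*,\ (a^{\dagger})^*,\ (a^{\#})^*\}$. Then $a\in R^{SEP}$ if and only if $aa^*a^{\dagger}xx^{\dagger}a\in PE(R)$ for some $x\in\chi_a$.
   Context: An involution on $R$ is a map $x\mapsto x^*$ with $(x^* )^*=x$, $(x+y)^*=x^*+y^*$, $(xy)^*=y^*x^*$. An element $a$ is Moore–Penrose invertible if there is $b$ with $aba=a$, $bab=b$, $(ab)^*=ab$, $(ba)^*=ba$; such $b$ is unique, denoted $a^{\dagger}$, and $R^{\dagger}$ is the set of such $a$ (all elements of $\chi_a$ are Moore–Penrose invertible when $a\in R^{\#}\cap R^{\dagger}$). An element $a$ is group invertible if there is $b$ with $aba=a$, $bab=b$, $ab=ba$; such $b$ is unique, denoted $a^{\#}$, and $R^{\#}$ is the set of such $a$. $PE(R)=\{e\in R: e^2=e=e^*\}$ is the set of projections. For $a\in R^{\#}\cap R^{\dagger}$, $a$ is SEP if $a^*=a^{\dagger}=a^{\#}$; $R^{SEP}$ denotes the set of SEP elements. *)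

From mathcomp Require Import all_boot all_algebra.
Set Implicit Arguments. Unset Strict Implicit. Unset Printing Implicit Defensive.
Import GRing.Theory.
Local Open Scope ring_scope.

Definition is_involution (R : pzRingType) (star : R -> R) : Prop :=
  [/\ forall x, star (star x) = x,
      forall x y, star (x + y) = star x + star y
    & forall x y, star (x * y) = star y * star x].

Definition is_mp_inverse (R : pzRingType) (star : R -> R) (a b : R) : Prop :=
  [/\ a * b * a = a, b * a * b = b, star (a * b) = a * b & star (b * a) = b * a].

Definition is_group_inverse (R : pzRingType) (a b : R) : Prop :=
  [/\ a * b * a = a, b * a * b = b & a * b = b * a].

Definition is_projection (R : pzRingType) (star : R -> R) (e : R) : Prop :=
  e * e = e /\ star e = e.

(* a is SEP: a \in R^# \cap R^dagger and a^* = a^dagger = a^#,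
   i.e. a^* is both the Moore-Penrose inverse and the group inverse of a. *)
Definition is_SEP (R : pzRingType) (star : R -> R) (a : R) : Prop :=
  is_mp_inverse star a (star a) /\ is_group_inverse a (star a).

Definition chi (R : pzRingType) (star : R -> R) (a ag ad : R) : seq R :=
  [:: a; ag; ad; star a; star ad; star ag].

(* For x in chi_a, the range projection x x^dagger is either a a^dagger (when
   x is a, a^# or (a^dagger)^* ) or a^dagger a (the same three elements for a^*
   in place of a), so the element in question is e = a a^* a^dagger X a with
   X in {a a^dagger, a^dagger a}.  The prefix a a^* a^dagger has a left inverse
   modulo a a^dagger, namely a (a a^#)^* (a^dagger)^* a^dagger; since e is
   hermitian, e = e a a^dagger, and cancelling that prefix yields
   a^2 a^dagger = a, i.e. a^# = a^dagger.  Then e = a a^*, and a a^* being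
   idempotent forces a^* = a^dagger. *)

From mathcomp Require Import all_boot all_algebra.
Set Implicit Arguments. Unset Strict Implicit.
Import GRing.Theory.
Local Open Scope ring_scope.

Section Involution.
Variables (R : pzRingType) (star : R -> R).
Hypothesis inv : is_involution star.

Lemma starK : involutive star. Proof. by case: inv. Qed.
Lemma starM x y : star (x * y) = star y * star x. Proof. by case: inv. Qed.

Lemma mp_inverse_unique a b c :
  is_mp_inverse star a b -> is_mp_inverse star a c -> b = c.
Proof.
move=> [b1 b2 b3 b4] [c1 c2 c3 c4].
have sa_ac : star a = star a * (a * c) by rewrite -[in LHS]c1 starM c3.
have sa_ca : star a = c * a * star a by rewrite -[in LHS]c1 -mulrA starM c4.
have ab : a * b = a * c by rewrite -b3 starM sa_ac mulrA -starM b3 mulrA b1.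
have ba : b * a = c * a.
  by rewrite -b4 starM sa_ca -mulrA -starM b4 -(mulrA c) [a * (b * a)]mulrA b1.
by rewrite -b2 -mulrA ab mulrA ba c2.
Qed.

Lemma mp_inverse_star a b :
  is_mp_inverse star a b -> is_mp_inverse star (star a) (star b).
Proof.
move=> [h1 h2 h3 h4]; split.
- by rewrite -!starM mulrA h1.
- by rewrite -!starM mulrA h2.
- by rewrite -starM h4.
- by rewrite -starM h3.
Qed.

Lemma group_inverse_star a g :
  is_group_inverse a g -> is_group_inverse (star a) (star g).
Proof.
move=> [h1 h2 h3]; split.
- by rewrite -!starM mulrA h1.
- by rewrite -!starM mulrA h2.
- by rewrite -!starM h3.
Qed.

Lemma mp_range_proj_unique x xd P s :
  is_projection star P -> is_mp_inverse star x xd ->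
  P * x = x -> P = x * s -> x * xd = P.
Proof.
move=> [PP sP] [h1 _ h3 _] Px Pxs.
have xxdP : x * xd * P = P by rewrite [in LHS]Pxs mulrA h1 -Pxs.
by rewrite -h3 -[in LHS]Px -mulrA starM h3 sP xxdP.
Qed.

Lemma mp_range_proj_class b bg bd x xd :
  is_group_inverse b bg -> is_mp_inverse star b bd ->
  [\/ x = b, x = bg | x = star bd] -> is_mp_inverse star x xd ->
  x * xd = b * bd.
Proof.
move=> [g1 g2 g3] [m1 m2 m3 _] hx Mx.
have P : is_projection star (b * bd) by split; rewrite ?mulrA ?m1.
case: hx => ->{x} in Mx *.
- exact: mp_range_proj_unique P Mx m1 erefl.
- have bgE : b * bg * bg = bg by rewrite g3 g2.
  apply: (mp_range_proj_unique (s := b * b * bd)) P Mx _ _.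
    by rewrite -[in LHS]bgE !mulrA m1.
  by rewrite !mulrA -g3 g1.
- apply: (mp_range_proj_unique (s := star b)) P Mx _ _.
    by rewrite -m3 -starM mulrA m2.
  by rewrite -starM m3.
Qed.

Section Element.
Variables a ag ad : R.
Hypotheses (G : is_group_inverse a ag) (M : is_mp_inverse star a ad).

Lemma mp_range_proj_chi x xd :
  x \in chi star a ag ad -> is_mp_inverse star x xd ->
  x * xd = a * ad \/ x * xd = ad * a.
Proof.
have range_proj_a := mp_range_proj_class G M.
have range_proj_star_a :=
  mp_range_proj_class (group_inverse_star G) (mp_inverse_star M).
have [_ _ _ m4] := M; rewrite -starM m4 starK in range_proj_star_a.
rewrite !inE => /or4P[| | |/or3P[| |]] /eqP-> Mx.
- by left; apply: range_proj_a Mx; apply: Or31.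
- by left; apply: range_proj_a Mx; apply: Or32.
- by right; apply: range_proj_star_a Mx; apply: Or33.
- by right; apply: range_proj_star_a Mx; apply: Or31.
- by left; apply: range_proj_a Mx; apply: Or33.
- by right; apply: range_proj_star_a Mx; apply: Or32.
Qed.

Lemma mp_star_rproj : star a * a * ad = star a.
Proof. by have [m1 _ m3 _] := M; rewrite -mulrA -m3 -starM m1. Qed.

Lemma mp_lproj_star : ad * a * star a = star a.
Proof. by have [m1 _ _ m4] := M; rewrite -m4 -starM mulrA m1. Qed.

Lemma a_star_a_lcancel y z :
  a * star a * y = a * star a * z -> a * ad * y = a * ad * z.
Proof.
have [_ _ m3 _] := M.
have linv : star ad * ad * (a * star a) = a * ad.
  by rewrite -mulrA (mulrA ad) mp_lproj_star -starM m3.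
by move=> e; rewrite -linv -mulrA e mulrA.
Qed.

Lemma rproj_mp_lcancel y z :
  a * ad * ad * y = a * ad * ad * z -> a * ad * y = a * ad * z.
Proof.
have [g1 _ g3] := G; have [m1 m2 m3 m4] := M.
set q := star (a * ag).
have q_p : q * (a * ad) = q by rewrite -m3 -starM mulrA m1.
have q_sa : q * star a = star a by rewrite -starM g3 mulrA g1.
have q_ad : q * ad = ad.
  have adE : ad = star a * star ad * ad by rewrite -starM m4 m2.
  by rewrite {1}adE !mulrA q_sa -adE.
have linv : a * q * (a * ad * ad) = a * ad.
  by rewrite mulrA -(mulrA a q) q_p -mulrA q_ad.
by move=> e; rewrite -linv -mulrA e mulrA.
Qed.

Lemma a_star_a_mp_lcancel y z :
  a * star a * ad * y = a * star a * ad * z -> a * ad * y = a * ad * z.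
Proof.
move=> e; apply: rproj_mp_lcancel; rewrite -!(mulrA (a * ad)).
by apply: a_star_a_lcancel; rewrite !mulrA.
Qed.

Lemma EP_of_projection X :
  X = a * ad \/ X = ad * a ->
  is_projection star (a * star a * ad * X * a) -> a * a * ad = a.
Proof.
have [g1 _ g3] := G; have [m1 _ m3 _] := M.
move=> hX [_ e_herm]; set e := _ * X * a in e_herm.
have pe : a * ad * e = e by rewrite /e !mulrA m1.
have ep : e * (a * ad) = e by rewrite -[in LHS]e_herm -m3 -starM pe e_herm.
move: ep; rewrite /e -!(mulrA (a * star a * ad)) => /a_star_a_mp_lcancel.
case: hX => ->; first by rewrite !mulrA !m1.
rewrite !mulrA -!(mulrA (a * ad * ad)) => /rproj_mp_lcancel.
have gaa : ag * a * a = a by rewrite -g3 g1.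
by rewrite !mulrA !m1 => /(congr1 (fun t => ag * t)); rewrite !mulrA !gaa.
Qed.

Lemma group_inverse_eq_mp : a * a * ad = a -> ag = ad.
Proof.
have [g1 g2 g3] := G; have [_ _ m3 _] := M.
move=> EP; have a_ag : a * ag = a * ad by rewrite g3 -{1}EP !mulrA -g3 g1.
apply: mp_inverse_unique M; split; [exact: g1 | exact: g2 | |].
  by rewrite a_ag.
by rewrite -g3 a_ag.
Qed.

Lemma partial_isometry_of_idem :
  a * star a * (a * star a) = a * star a -> star a = ad.
Proof.
have [_ m2 _ m4] := M.
have sa_sad : star a * star ad = ad * a by rewrite -starM m4.
move=> /(congr1 (fun t => ad * t * star ad)).
rewrite !mulrA !mp_lproj_star -mulrA sa_sad mulrA mp_star_rproj => sa_a.
by rewrite -[LHS]mp_star_rproj sa_a m2.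
Qed.

Lemma SEP_of_projection X :
  X = a * ad \/ X = ad * a ->
  is_projection star (a * star a * ad * X * a) -> is_SEP star a.
Proof.
move=> hX Pe; have ag_ad := group_inverse_eq_mp (EP_of_projection hX Pe).
have [g1 _ g3] := G; rewrite ag_ad in g1 g3.
have X_ad_a : X = ad * a by case: hX => ->.
have e_aastar : a * star a * ad * X * a = a * star a.
  rewrite X_ad_a -mulrA -mulrA -g3 g1.
  by rewrite -mulrA -g3 (mulrA (star a)) mp_star_rproj.
have sa_ad : star a = ad.
  by apply: partial_isometry_of_idem; case: Pe; rewrite e_aastar.
by rewrite /is_SEP sa_ad -{2}ag_ad.
Qed.

Lemma projection_of_SEP :
  is_SEP star a -> is_projection star (a * star a * ad * a * ad * a).
Proof.
have [_ m2 _ m4] := M.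
move=> [Ms Gs]; have sa_ad := mp_inverse_unique Ms M; rewrite sa_ad in Gs *.
have [_ _ g3] := Gs; rewrite g3 !m2.
by split; [rewrite mulrA m2 | rewrite m4].
Qed.

End Element.

End Involution.

Theorem corollary2p4 (R : pzRingType) (star : R -> R) (a ag ad : R) :
  is_involution star ->
  is_group_inverse a ag ->
  is_mp_inverse star a ad ->
  (is_SEP star a <->
   exists x xd : R,
     [/\ x \in chi star a ag ad,
         is_mp_inverse star x xd
       & is_projection star (a * star a * ad * x * xd * a)]).
Proof.
move=> inv G M; split=> [SEP | [x [xd [x_chi Mx Pe]]]].
  exists a, ad; split=> //; first by rewrite inE eqxx.
  exact: projection_of_SEP.
apply: (SEP_of_projection inv G M (mp_range_proj_chi inv G M x_chi Mx)).
by rewrite mulrA.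
Qed.
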